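(* Let $W\in\mathbb{D}_n$ be a Dale matrix satisfying the Ground Assumption, and let $\sigma\subset\mathcal{E}$ be nonempty. Then $\sigma\in\mathcal{C}(W)$ if and only if both (i) $\rho(W_{\mathcal{E_U}\cap\sigma})<1$ (spectral condition; with the convention that the spectral radius of the empty matrix is $0$) and (ii) $\sigma\in\mathrm{code}(G_{\mathcal{E}},\mathcal{E_U})$, i.e. $N^+_{G_\mathcal{E}}(\sigma)\cap\mathcal{E_U}\subset\sigma$ (graph condition).
   Context: Threshold-linear network: $\dot x_i=-x_i+[\sum_j W_{ij}x_j+b_i]_+$ with $[y]_+=\max(0,y)$; a fixed point is $x^*$ with $x^*=[Wx^*+b]_+$. A Dale matrix $W\in\mathbb{D}_n$ is an $n\times n$ real matrix with a partition $[n]=\mathcal{E}\sqcup\mathcal{I}$ such that $W_{ii}=0$, $W_{ji}\ge 0$ for all $j$ if $i\in\mathcal{E}$, and $W_{ji}\le0$ for all $j$ if $i\in\mathcal{I}$. Ground Assumption: $(I-W)_\sigma$ nonsingular for every nonempty $\sigma\subset[n]$. Excitatory support: $\mathrm{supp}_+x=\{i\in\mathcal{E}:x_i>0\}$. Combinatorial code: $\mathcal{C}(W)=\{\mathrm{supp}_+x^*: b\in\mathbb{R}^n_{\ge0},\ x^*\in\mathbb{R}^n_{\ge0}\text{ a fixed point of }(W,b)\}$. The excitatory connectivity graph $G_\mathcal{E}$ is the directed graph on vertex set $\mathcal{E}$ with an arc $i\to j$ iff $i\ne j$ and $W_{ji}>0$. The uninhibited set is $\mathcal{E_U}=\{j\in\mathcal{E}: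 W_{ji}=0\ \forall i\in\mathcal{I}\}$. For a directed graph $G$ on $\mathcal{E}$ and $\sigma\subset\mathcal{E}$, the out-neighborhood is $N^+_G(\sigma)=\bigcup_{i\in\sigma}\{j\in\mathcal{E}: i\to j\}$, and for $U\subset\mathcal{E}$, $\mathrm{code}(G,U)=\{\sigma\subset\mathcal{E}: N^+_G(\sigma)\cap U\subset\sigma\}$. $W_{\tau}$ is the principal submatrix on $\tau$ and $\rho$ denotes spectral radius. *)

From HB Require Import structures.
From mathcomp Require Import all_boot all_order all_algebra.
From mathcomp Require Import reals.
From mathcomp Require Import complex.
Set Implicit Arguments. Unset Strict Implicit. Unset Printing Implicit Defensive.
Import Order.TTheory GRing.Theory Num.Theory.
Local Open Scope ring_scope.

Section TLN.
Variable R : realType.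

(* principal submatrix W_sigma, rows/columns indexed by sigma (in increasing order) *)
Definition principal_submx n (A : 'M[R]_n) (s : {set 'I_n}) : 'M[R]_#|s| :=
  \matrix_(i < #|s|, j < #|s|) A (enum_val i) (enum_val j).

Definition eigenvaluesC k (A : 'M[R]_k) : seq R[i] :=
  sval (closed_field_poly_normal (char_poly (map_mx (fun x : R => x%:C%C) A))).

(* spectral radius: the maximal modulus of a complex eigenvalue (0 for the empty matrix) *)
Definition spectral_radius k (A : 'M[R]_k) : R :=
  \big[Num.max/0]_(z <- eigenvaluesC A) ComplexField.Normc.normc z.

(* W is a Dale matrix w.r.t. the partition [n] = E ⊔ ~: E (I = ~: E) *)
Definition dale n (W : 'M[R]_n) (E : {set 'I_n}) : Prop :=
  (forall i, W i i = 0) /\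
  (forall i j, i \in E -> 0 <= W j i) /\
  (forall i j, i \notin E -> W j i <= 0).

Definition ground_assumption n (W : 'M[R]_n) : Prop :=
  forall s : {set 'I_n}, s != set0 -> principal_submx (1%:M - W) s \in unitmx.

Definition is_fixed_point n (W : 'M[R]_n) (b x : 'cV[R]_n) : Prop :=
  forall i, x i 0 = Num.max 0 ((W *m x + b) i 0).

Definition supp_plus n (E : {set 'I_n}) (x : 'cV[R]_n) : {set 'I_n} :=
  [set i in E | 0 < x i 0].

Definition in_comb_code n (W : 'M[R]_n) (E : {set 'I_n}) (s : {set 'I_n}) : Prop :=
  exists b x : 'cV[R]_n,
    (forall i, 0 <= b i 0) /\ (forall i, 0 <= x i 0) /\
    is_fixed_point W b x /\ supp_plus E x = s.

Definition GE_arc n (W : 'M[R]_n) (E : {set 'I_n}) (i j : 'I_n) : bool :=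
  [&& i \in E, j \in E, i != j & 0 < W j i].

Definition uninhibited n (W : 'M[R]_n) (E : {set 'I_n}) : {set 'I_n} :=
  [set j in E | [forall i in ~: E, W j i == 0]].

Definition out_nbhd n (W : 'M[R]_n) (E : {set 'I_n}) (s : {set 'I_n}) : {set 'I_n} :=
  [set j in E | [exists i in s, GE_arc W E i j]].

Definition graph_code n (W : 'M[R]_n) (E U : {set 'I_n}) : {set {set 'I_n}} :=
  [set s : {set 'I_n} | (s \subset E) && (out_nbhd W E s :&: U \subset s)].

End TLN.

From HB Require Import structures.
From mathcomp Require Import all_boot all_order all_algebra.
From mathcomp Require Import reals.
From mathcomp Require Import complex.
From mathcomp Require Import ring lra.
Set Implicit Arguments. Unset Strict Implicit. Unset Printing Implicit Defensive.
Import Order.TTheory GRing.Theory Num.Theory.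
Local Open Scope ring_scope.

(* Write U = E_U :&: s.  At a fixed point with excitatory support s, the neurons of
   E_U receive excitatory input only: an arc from s into E_U therefore forces its
   target to fire (graph condition), and the rates on U form a positive vector x with
   W_U x <= x.  An eigenvalue of W_U of modulus >= 1 would give, through the moduli of
   an eigenvector, a nonnegative y <> 0 with y <= W_U y; comparing y with x along the
   least ratio x_j / y_j isolates a nonempty block Z with y = W_Z y > 0 on Z, against
   the invertibility of (I - W)_Z.
   Conversely, rho(W_U) < 1 makes W_U^m 1 small, and a truncated Neumann series gives
   x > 0 with W_U x + 1 <= x.  Firing U along a large multiple of x, the rest of s at
   rate 1 and all inhibitory neurons at a large common rate yields x >= 0 with
   W x <= x and excitatory support s, a fixed point for the input b = x - W x. *)

Section Vanishing.
Variable R : archiRealFieldType.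

Definition vanishing (a : nat -> R) :=
  forall e, 0 < e -> exists M, forall m, (M <= m)%N -> a m <= e.

Lemma bernoulli_le1 (q : R) (j : nat) : 0 <= q <= 1 ->
  q ^+ j * (1 + j%:R * (1 - q)) <= 1.
Proof.
move=> /andP[q0 q1]; elim: j => [|j IH]; first by rewrite expr0 mul0r addr0 mulr1.
have X1 : q ^+ j <= 1 by rewrite exprn_ile1.
have X0 : 0 <= q ^+ j by rewrite exprn_ge0.
rewrite exprS -mulrA -natr1.
set X := q ^+ j in IH X0 X1 *; set t := j%:R in IH *.
have h1 : 0 <= q * (1 - X * (1 + t * (1 - q))) by apply: mulr_ge0; lra.
have h2 : 0 <= (1 - q) * (1 - q * X).
  have : q * X <= 1 * 1 by rewrite ler_pM.
  by move=> qX; apply: mulr_ge0; lra.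
nra.
Qed.

Lemma vanishing_geometric (q c : R) : 0 <= q < 1 -> 0 <= c ->
  vanishing (fun j => q ^+ j * c).
Proof.
move=> /andP[q0 q1] c0 e e0.
have k0 : 0 <= c / (e * (1 - q)) by apply: divr_ge0 => //; apply: mulr_ge0; lra.
exists (Num.bound (c / (e * (1 - q)))) => j hj.
have ck : c <= j%:R * (e * (1 - q)).
  rewrite -ler_pdivrMr; last by apply: mulr_gt0; lra.
  have := archi_boundP k0; have : (Num.bound (c / (e * (1 - q))))%:R <= j%:R :> R.
    by rewrite ler_nat.
  lra.
have hB : q ^+ j * (1 + j%:R * (1 - q)) <= 1 by rewrite bernoulli_le1 // q0 ltW.
have : 0 <= q ^+ j by rewrite exprn_ge0.
have : 0 <= j%:R :> R by [].
nra.
Qed.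

Lemma vanishing_contraction (a b : nat -> R) (q : R) : 0 <= q < 1 ->
  (forall m, 0 <= a m) -> (forall m, a m.+1 <= q * a m + b m) ->
  vanishing b -> vanishing a.
Proof.
move=> q01 a0 ab hb e e0; have /andP[q0 q1] := q01.
have [M hM] : exists M, forall m, (M <= m)%N -> b m <= e * (1 - q) / 2.
  by apply: hb; rewrite divr_gt0 // mulr_gt0 // subr_gt0.
have tail j : a (M + j)%N <= q ^+ j * a M + e / 2.
  elim: j => [|j IH]; first by rewrite addn0 expr0 mul1r; lra.
  rewrite addnS exprS; apply: le_trans (ab _) _.
  have := hM (M + j)%N (leq_addr _ _); nra.
have [J hJ] : exists J, forall j, (J <= j)%N -> q ^+ j * a M <= e / 2.
  by apply: vanishing_geometric => //; lra.
exists (M + J)%N => m hm; rewrite -(subnKC (leq_trans (leq_addr J M) hm)).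
apply: le_trans (tail _) _.
have := hJ (m - M)%N; rewrite leq_subRL ?(leq_trans (leq_addr J M) hm) // => /(_ hm).
lra.
Qed.

End Vanishing.

Section NonnegativeMatrix.
Variables (R : realFieldType) (I : finType) (A : I -> I -> R).
Hypothesis A_ge0 : forall i j, 0 <= A i j.

(* [c] is the least ratio [x_j / y_j]; the block is where [c y = x] is tight. *)
Lemma supervector_fixed_block (x y : I -> R) :
  (forall i, 0 < x i) -> (forall i, \sum_j A i j * x j <= x i) ->
  (forall i, 0 <= y i) -> (exists i, 0 < y i) ->
  (forall i, y i <= \sum_j A i j * y j) ->
  exists Z : {set I}, [/\ Z != set0, {in Z, forall i, 0 < y i} &
     {in Z, forall i, y i = \sum_(j in Z) A i j * y j}].
Proof.
move=> x_gt0 Ax y_ge0 [i1 yi1] Ay.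
have [i0 yi0 min_i0] : exists2 i0, 0 < y i0 & forall j, 0 < y j -> x i0 / y i0 <= x j / y j.
  by case: (@arg_minP _ _ _ i1 (fun i => 0 < y i) (fun i => x i / y i) yi1) => i; exists i.
set c := x i0 / y i0; have c_gt0 : 0 < c by rewrite divr_gt0.
have cyx j : c * y j <= x j.
  have [->|yj0] := eqVneq (y j) 0; first by rewrite mulr0 ltW.
  by rewrite -ler_pdivlMr ?min_i0 // lt_def yj0 y_ge0.
set Z := [set j | c * y j == x j].
have ZP j : reflect (c * y j = x j) (j \in Z) by rewrite inE; apply: eqP.
have yZ : {in Z, forall i, 0 < y i}.
  by move=> i /ZP cyi; have := x_gt0 i; rewrite -cyi pmulr_rgt0.
have slack_ge0 i l : 0 <= A i l * (x l - c * y l) by rewrite mulr_ge0 // subr_ge0.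
have slack0 i : i \in Z -> \sum_l A i l * (x l - c * y l) = 0.
  move=> /ZP cyi; apply/eqP; rewrite eq_le sumr_ge0 // andbT.
  have : c * y i <= c * \sum_l A i l * y l by rewrite ler_pM2l.
  have -> : \sum_l A i l * (x l - c * y l) = \sum_l A i l * x l - c * \sum_l A i l * y l.
    by rewrite mulr_sumr -sumrB; apply: eq_bigr => l _; ring.
  by have := Ax i; lra.
have AZ i j : i \in Z -> j \notin Z -> A i j = 0.
  move=> /slack0 /(psumr_eq0P (fun l _ => slack_ge0 i l)) /(_ j isT) /eqP.
  by rewrite mulf_eq0 subr_eq0 eq_sym inE => /orP[/eqP // | /eqP ->]; rewrite eqxx.
have sumZ i : i \in Z -> \sum_j A i j * y j = \sum_(j in Z) A i j * y j.
  move=> iZ; rewrite (bigID (mem Z)) /= [X in _ + X]big1 ?addr0 // => j jZ.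
  by rewrite AZ ?mul0r.
exists Z; split=> //; first by apply/set0Pn; exists i0; apply/ZP; rewrite divfK // gt_eqF.
move=> i iZ; apply/eqP; rewrite eq_le -sumZ ?Ay //=.
rewrite -(ler_pM2l c_gt0) (ZP i iZ) mulr_sumr; apply: le_trans (Ax i).
by apply: ler_sum => j _; rewrite mulrCA ler_wpM2l.
Qed.

End NonnegativeMatrix.

Section ComplexVectors.
Variable R : realType.
Local Notation C := R[i].
Local Notation normc := (@Normc.normc R).

Lemma normc_ge0 (z : C) : 0 <= normc z.
Proof. by case: z => a b; rewrite /Normc.normc sqrtr_ge0. Qed.

Lemma normc_real (x : R) : normc x%:C%C = `|x|.
Proof. by rewrite /Normc.normc /= expr0n /= addr0 sqrtr_sqr. Qed.

Lemma normc_sum (I : finType) (F : I -> C) : normc (\sum_i F i) <= \sum_i normc (F i).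
Proof.
elim/big_rec2: _ => [|i a b _ h]; first by rewrite Normc.normc0.
by apply: le_trans (le_normcD _ _) _; rewrite lerD2l.
Qed.

Definition vnorm1 k (v : 'cV[C]_k) : R := \sum_i normc (v i 0).

Lemma vnorm1_ge0 k (v : 'cV[C]_k) : 0 <= vnorm1 v.
Proof. by apply: sumr_ge0 => i _; apply: normc_ge0. Qed.

Lemma vnorm1_0 k : vnorm1 (0 : 'cV[C]_k) = 0.
Proof. by rewrite /vnorm1 big1 // => i _; rewrite mxE Normc.normc0. Qed.

Lemma vanishing_eigen_step k (Y : nat -> 'cV[C]_k) (z : C) : normc z < 1 ->
  vanishing (fun m => vnorm1 (Y m.+1 - z *: Y m)) -> vanishing (fun m => vnorm1 (Y m)).
Proof.
move=> z1; apply: (vanishing_contraction (q := normc z)); first by rewrite normc_ge0.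
  by move=> m; apply: vnorm1_ge0.
move=> m; rewrite /vnorm1 mulr_sumr -big_split /=; apply: ler_sum => i _.
have -> : Y m.+1 i 0 = z * Y m i 0 + (Y m.+1 - z *: Y m) i 0 by rewrite !mxE; ring.
by apply: le_trans (le_normcD _ _) _; rewrite Normc.normcM.
Qed.

(* Each factor [B - z] with [|z| < 1] of an annihilating product can be peeled off. *)
Lemma vanishing_pow_mx k (B : 'M[C]_k) (r : seq C) (v : 'cV[C]_k) :
  all (fun z => normc z < 1) r -> \prod_(z <- r) (B - z%:M) = 0 ->
  vanishing (fun m => vnorm1 (B ^+ m *m v)).
Proof.
move=> r1 P0.
suff : vanishing (fun m => vnorm1 ((\prod_(z <- r) (B - z%:M)) *m (B ^+ m *m v))).
  elim: r r1 {P0} => [_ h e /h[M hM]|z r IH /andP[z1 r1]].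
    by exists M => m /hM; rewrite big_nil mul1mx.
  move=> vanish_zr; apply: IH r1 _; apply: (vanishing_eigen_step z1).
  set P := \prod_(y <- r) (B - y%:M) in vanish_zr *.
  have BP : GRing.comm B P.
    apply: commr_prod => y _; apply: commrB; first exact: commr_refl.
    by rewrite /GRing.comm -!mulmxE scalar_mxC.
  suff zrE m : \prod_(y <- z :: r) (B - y%:M) *m (B ^+ m *m v) =
      P *m (B ^+ m.+1 *m v) - z *: (P *m (B ^+ m *m v)).
    by move=> e /vanish_zr[M hM]; exists M => m /hM; rewrite zrE.
  rewrite big_cons -/P -mulmxE !mulmxBl mul_scalar_mx -scalemxAl.
  have -> : B *m P = P *m B by exact: BP.
  by rewrite exprS -mulmxE !mulmxA.
by rewrite P0 => e e0; exists 0%N => m _; rewrite mul0mx vnorm1_0 ltW.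
Qed.

End ComplexVectors.

Lemma right_eigenvector (F : fieldType) k (B : 'M[F]_k) z :
  root (char_poly B) z -> exists2 u : 'cV_k, u != 0 & B *m u = z *: u.
Proof.
rewrite -eigenvalue_root_char => /eigenvalueP[v vB v0].
have : \det (z%:M - B)^T == 0.
  by rewrite det_tr; apply/det0P; exists v; rewrite // mulmxBr vB mul_mx_scalar subrr.
case/det0P=> w w0 /(congr1 trmx); rewrite trmx_mul trmxK trmx0 mulmxBl mul_scalar_mx.
by move/eqP; rewrite subr_eq0 eq_sym => /eqP Bw; exists w^T; rewrite // trmx_eq0.
Qed.

Section Spectrum.
Variable R : realType.
Local Notation C := R[i].
Local Notation normc := (@Normc.normc R).
Local Notation toC := (map_mx (real_complex R)).

Lemma char_poly_eigenvaluesC k (A : 'M[R]_k) :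
  char_poly (toC A) = \prod_(z <- eigenvaluesC A) ('X - z%:P).
Proof.
rewrite /eigenvaluesC; case: closed_field_poly_normal => r /= ->.
by rewrite (monicP (char_poly_monic _)) scale1r.
Qed.

Lemma spectral_radius_lt1P k (A : 'M[R]_k) :
  spectral_radius A < 1 <-> {in eigenvaluesC A, forall z, normc z < 1}.
Proof.
split=> [rho1 z zA|eig1].
  by apply: le_lt_trans rho1; apply: (le_bigmax_seq 0 z xpredT (fun z : C => normc z) zA).
rewrite /spectral_radius big_seq_cond; apply: bigmax_lt => [|z /andP[zA _]].
  exact: ltr01.
exact: eig1.
Qed.

Lemma vanishing_pow_mx_real k (A : 'M[R]_k) (v : 'cV[R]_k) :
  spectral_radius A < 1 -> vanishing (fun m => \sum_i `|(A ^+ m *m v) i 0|).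
Proof.
case: k A v => [|k] A v.
  by move=> _ e e0; exists 0%N => m _; rewrite big_ord0 ltW.
move/spectral_radius_lt1P => eig1.
have P0 : \prod_(z <- eigenvaluesC A) (toC A - z%:M) = 0.
  rewrite -(Cayley_Hamilton (toC A)) char_poly_eigenvaluesC rmorph_prod.
  by apply: eq_bigr => z _; rewrite rmorphB /= horner_mx_X horner_mx_C.
have := vanishing_pow_mx (toC v) (introT allP eig1) P0.
move=> vanish e /vanish[M hM]; exists M => m /hM; apply: le_trans.
rewrite /vnorm1 -rmorphXn -map_mxM; apply: ler_sum => j _.
by rewrite [X in normc X]mxE normc_real.
Qed.

Lemma eigenvalue_supervector k (A : 'M[R]_k) z :
  (forall i j, 0 <= A i j) -> z \in eigenvaluesC A -> 1 <= normc z ->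
  exists y : 'I_k -> R, [/\ forall i, 0 <= y i, exists i, 0 < y i &
     forall i, y i <= \sum_j A i j * y j].
Proof.
move=> A0 zA z1.
have [u u0 Au] : exists2 u : 'cV_k, u != 0 & toC A *m u = z *: u.
  by apply: right_eigenvector; rewrite char_poly_eigenvaluesC root_prod_XsubC.
exists (fun i => normc (u i 0)); split.
- by move=> i; apply: normc_ge0.
- have [i ui] : exists i, u i 0 != 0.
    apply/existsP; apply: contraNT u0 => /existsPn u0; apply/eqP/matrixP => i j.
    by rewrite (ord1 j) mxE; apply/eqP/negbNE/u0.
  by exists i; rewrite lt_def normc_ge0 andbT; apply: contra ui => /eqP/Normc.eq0_normc ->.
- move=> i; apply: (@le_trans _ _ (normc z * normc (u i 0))).
    by rewrite ler_peMl // normc_ge0.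
  rewrite -Normc.normcM; have := congr1 (fun w : 'cV_k => w i 0) Au; rewrite !mxE => <-.
  apply: le_trans (normc_sum _) _; apply: ler_sum => j _.
  by rewrite mxE Normc.normcM normc_real ger0_norm.
Qed.

Lemma pow_mx_ge0 k (A : 'M[R]_k) m :
  (forall i j, 0 <= A i j) -> forall i j, 0 <= (A ^+ m) i j.
Proof.
move=> A0; elim: m => [|m IH] i j; first by rewrite expr0 mxE ler0n.
by rewrite exprS -mulmxE mxE; apply: sumr_ge0 => l _; apply: mulr_ge0.
Qed.

(* The truncated Neumann series [2 \sum_(m < M) A^m 1], once [A^M 1 <= 1/2]. *)
Lemma spectral_radius_lt1_subinvariant k (A : 'M[R]_k) :
  (forall i j, 0 <= A i j) -> spectral_radius A < 1 ->
  exists x : 'I_k -> R, (forall i, 0 < x i) /\ forall i, \sum_j A i j * x j + 1 <= x i.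
Proof.
move=> A0 /(vanishing_pow_mx_real (const_mx 1)) /(_ (1 / 2))[|M /(_ M (leqnn M)) AM].
  by rewrite divr_gt0.
pose v : 'cV[R]_k := const_mx 1; pose S := \sum_(m < M) A ^+ m.
have AMv i : (A ^+ M *m v) i 0 <= 1 / 2.
  apply: le_trans (ler_norm _) (le_trans _ AM).
  by rewrite (bigD1 i) //= lerDl; apply: sumr_ge0 => j _.
have ASv i : 0 <= (A *m (S *m v)) i 0.
  rewrite mxE; apply: sumr_ge0 => j _; apply: mulr_ge0 => //; rewrite mxE.
  apply: sumr_ge0 => l _; apply: mulr_ge0; last by rewrite mxE.
  by rewrite /S summxE; apply: sumr_ge0 => m _; apply: pow_mx_ge0.
have neumann i : (A *m (S *m v)) i 0 + 1 = (S *m v) i 0 + (A ^+ M *m v) i 0.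
  have geom : A * S + 1 = S + A ^+ M.
    rewrite /S; elim: (M) => [|N IH]; first by rewrite big_ord0 mulr0 !add0r.
    by rewrite big_ord_recr /= mulrDr exprS -IH addrAC.
  have := congr1 (fun B : 'M_k => (B *m v) i 0) geom.
  by rewrite /= !mulmxDl mul1mx -mulmxE -mulmxA !mxE.
exists (fun i => 2 * (S *m v) i 0); split=> [i|i].
  by have := neumann i; have := ASv i; have := AMv i; lra.
have -> : \sum_j A i j * (2 * (S *m v) j 0) = 2 * (A *m (S *m v)) i 0.
  by rewrite mxE mulr_sumr; apply: eq_bigr => j _; rewrite mulrCA.
by have := neumann i; have := AMv i; lra.
Qed.

End Spectrum.

Section ExtendVector.
Variables (R : pzRingType) (T : finType) (U : {set T}).

Definition extend (y : 'I_#|U| -> R) (j : T) : R := \sum_(a | enum_val a == j) y a.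

Lemma extend_enum_val y a : extend y (enum_val a) = y a.
Proof. by rewrite /extend (big_pred1 a) // => b /=; rewrite (inj_eq enum_val_inj). Qed.

Lemma extend_out y j : j \notin U -> extend y j = 0.
Proof.
by move=> jU; rewrite /extend big_pred0 // => a; apply: contraNF jU => /eqP <-; apply: enum_valP.
Qed.

Lemma sum_mul_extend y (F : T -> R) :
  \sum_j F j * extend y j = \sum_a F (enum_val a) * y a.
Proof.
rewrite (bigID (mem U)) /= [X in _ + X]big1 ?addr0 => [|j /extend_out ->]; last by rewrite mulr0.
by rewrite (big_enum_val (A := mem U)) /=; apply: eq_bigr => a _; rewrite extend_enum_val.
Qed.

End ExtendVector.

Section ThresholdLinear.
Variables (R : realType) (n : nat) (W : 'M[R]_n) (E : {set 'I_n}).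
Local Notation EU := (uninhibited W E).

Lemma comb_code_of_subsolution (x : 'cV[R]_n) :
  (forall j, 0 <= x j 0) -> (forall j, (W *m x) j 0 <= x j 0) ->
  in_comb_code W E (supp_plus E x).
Proof.
move=> x_ge0 Wx_le; exists (x - W *m x), x.
split=> [j|]; first by have := Wx_le j; rewrite !mxE subr_ge0.
by split=> //; split=> // j; rewrite addrC subrK max_r.
Qed.

Lemma ground_no_fixed_block (Z : {set 'I_n}) (w : 'I_n -> R) :
  ground_assumption W -> Z != set0 -> {in Z, forall i, 0 < w i} ->
  ~ {in Z, forall i, w i = \sum_(j in Z) W i j * w j}.
Proof.
move=> GA /[dup] /set0Pn[j0 j0Z] /GA IWZ w_gt0 w_fix.
pose v : 'cV[R]_#|Z| := \col_a w (enum_val a).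
suff /(congr1 (fun u : 'cV[R]_#|Z| => u (enum_rank_in j0Z j0) 0)) : v = 0.
  by rewrite !mxE enum_rankK_in // => w0; have := w_gt0 _ j0Z; rewrite w0 ltxx.
rewrite -(mulKmx IWZ v); suff -> : principal_submx (1%:M - W) Z *m v = 0 by rewrite mulmx0.
apply/matrixP => a b; rewrite !mxE.
transitivity (\sum_(j in Z) (1%:M - W) (enum_val a) j * w j).
  by rewrite (big_enum_val (A := mem Z)) /=; apply: eq_bigr => c _; rewrite !mxE.
rewrite (eq_bigr (fun j => (enum_val a == j)%:R * w j - W (enum_val a) j * w j)) => [|j _].
  rewrite sumrB -w_fix ?enum_valP // (bigD1 (enum_val a)) ?enum_valP //= eqxx mul1r.
  by rewrite big1 ?addr0 ?subrr // => j /andP[_ ja]; rewrite eq_sym (negPf ja) mul0r.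
by rewrite !mxE mulrBl.
Qed.

Hypothesis dale_W : dale W E.

Lemma uninhibitedP j :
  reflect (j \in E /\ forall i, i \notin E -> W j i = 0) (j \in EU).
Proof.
rewrite inE; apply: (iffP andP) => [[jE /forall_inP Wj]|[jE Wj]]; split=> //.
  by move=> i iE; apply/eqP/Wj; rewrite inE.
by apply/forall_inP => i; rewrite inE => /Wj ->.
Qed.

Lemma inhibited_input j : j \in E -> j \notin EU -> exists2 i, i \notin E & W j i < 0.
Proof.
have [_ [_ Winh]] := dale_W.
move=> jE; rewrite inE jE /= => /forall_inPn [i iE Wji].
by exists i; [move: iE; rewrite inE | rewrite lt_neqAle Wji Winh // -in_setC].
Qed.

Lemma uninhibited_input_ge (b x : 'cV[R]_n) (S : {set 'I_n}) j :
  (forall i, 0 <= b i 0) -> (forall i, 0 <= x i 0) -> j \in EU ->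
  \sum_(l in S) W j l * x l 0 <= (W *m x + b) j 0.
Proof.
have [_ [Wexc _]] := dale_W.
move=> b_ge0 x_ge0 /uninhibitedP[jE Wj].
rewrite !mxE [X in _ <= X + _](bigID (mem S)) /= -addrA lerDl addr_ge0 ?sumr_ge0 // => l _.
by have [lE|/Wj ->] := boolP (l \in E); rewrite ?mul0r // mulr_ge0 ?Wexc.
Qed.

Lemma code_graph_condition s : in_comb_code W E s -> s \in graph_code W E EU.
Proof.
move=> [b [x [b_ge0 [x_ge0 [fix_x <-]]]]].
have suppP i : reflect (i \in E /\ 0 < x i 0) (i \in supp_plus E x) by rewrite inE; apply: andP.
rewrite inE; apply/andP; split; first by apply/subsetP => i /suppP[].
apply/subsetP => j; rewrite inE => /andP[]; rewrite inE.
move=> /andP[jE /exists_inP[i /suppP[_ xi] /and4P[_ _ _ Wji]]] jEU.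
apply/suppP; split=> //; rewrite fix_x lt_max; apply/orP; right.
apply: lt_le_trans (uninhibited_input_ge [set i] b_ge0 x_ge0 jEU).
by rewrite big_set1 mulr_gt0.
Qed.

Lemma code_spectral_condition s : ground_assumption W -> in_comb_code W E s ->
  spectral_radius (principal_submx W (EU :&: s)) < 1.
Proof.
move=> GA [b [x [b_ge0 [x_ge0 [fix_x <-]]]]].
set U := EU :&: supp_plus E x; set A := principal_submx W U.
have UP (a : 'I_#|U|) : [/\ enum_val a \in EU, enum_val a \in E & 0 < x (enum_val a) 0].
  by move: (enum_valP a); rewrite !inE => /andP[-> /andP[-> ->]].
have A_ge0 a c : 0 <= A a c by have [_ [Wexc _]] := dale_W; rewrite mxE Wexc //; case: (UP c).
have x_fix j : 0 < x j 0 -> x j 0 = (W *m x + b) j 0.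
  by rewrite fix_x lt_max ltxx /= => /ltW/max_r.
apply/spectral_radius_lt1P => z zA; rewrite ltNge; apply/negP => z1.
have [y [y_ge0 y_pos Ay]] := eigenvalue_supervector A_ge0 zA z1.
have x_gt0 (a : 'I_#|U|) : 0 < x (enum_val a) 0 by case: (UP a).
have Ax (a : 'I_#|U|) : \sum_c A a c * x (enum_val c) 0 <= x (enum_val a) 0.
  have [aEU _ xa] := UP a; rewrite [leRHS]x_fix //.
  apply: le_trans (uninhibited_input_ge U b_ge0 x_ge0 aEU).
  by rewrite (big_enum_val (A := mem U)) /=; under eq_bigr do rewrite mxE.
have [Z [Z0 yZ Zfix]] := supervector_fixed_block A_ge0 x_gt0 Ax y_ge0 y_pos Ay.
apply: (@ground_no_fixed_block [set enum_val a | a in Z] (extend y) GA).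
- by case/set0Pn: Z0 => a aZ; apply/set0Pn; exists (enum_val a); apply: imset_f.
- by move=> _ /imsetP[a aZ ->]; rewrite extend_enum_val yZ.
- move=> _ /imsetP[a aZ ->]; rewrite extend_enum_val Zfix // big_imset /=.
    by apply: eq_bigr => c _; rewrite extend_enum_val mxE.
  by move=> a1 a2 _ _; apply: enum_val_inj.
Qed.

(* Inhibitory neurons all fire at a common rate [t], chosen large enough to silence
   every inhibited excitatory neuron and to dominate the input of every inhibitory one. *)
Lemma inhibition_subsolution (y : 'cV[R]_n) :
  (forall j, 0 <= y j 0) -> (forall j, j \notin E -> y j 0 = 0) ->
  (forall j, j \in EU -> (W *m y) j 0 <= y j 0) ->
  exists x : 'cV[R]_n, [/\ forall j, 0 <= x j 0, forall j, (W *m x) j 0 <= x j 0 &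
    forall j, j \in E -> x j 0 = y j 0].
Proof.
have [_ [_ Winh]] := dale_W.
move=> y_ge0 y_out Wy_le.
pose inh : 'cV[R]_n := \col_j (j \notin E)%:R.
pose d j := - (W *m inh) j 0.
have d_ge0 j : 0 <= d j.
  rewrite oppr_ge0 mxE sumr_le0 // => l _; rewrite mxE.
  by case: (boolP (l \in E)) => lE; rewrite ?mulr0 // mulr1 Winh.
pose t := \sum_j (`|(W *m y) j 0| + `|(W *m y) j 0| / d j).
have t_ge0 : 0 <= t by rewrite sumr_ge0 // => i _; rewrite addr_ge0 ?divr_ge0.
have t_ge j : `|(W *m y) j 0| + `|(W *m y) j 0| / d j <= t.
  by rewrite /t (bigD1 j) //= lerDl sumr_ge0 // => i _; rewrite addr_ge0 ?divr_ge0.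
have Wx j : (W *m (y + t *: inh)) j 0 = (W *m y) j 0 - t * d j.
  by rewrite mulmxDr -scalemxAr [LHS]mxE [X in _ + X]mxE /d mulrN opprK.
have xj j : (y + t *: inh) j 0 = y j 0 + t * (j \notin E)%:R by rewrite !mxE.
exists (y + t *: inh); split=> [j|j|j jE]; rewrite ?Wx xj; last by rewrite jE mulr0 addr0.
  by rewrite addr_ge0 ?mulr_ge0.
have td_ge0 := mulr_ge0 t_ge0 (d_ge0 j); have Wy_le_abs := ler_norm ((W *m y) j 0).
case: (boolP (j \in E)) => jE; last first.
  rewrite y_out // mulr1 add0r; have := t_ge j.
  by have := divr_ge0 (normr_ge0 ((W *m y) j 0)) (d_ge0 j); lra.
rewrite mulr0 addr0; case: (boolP (j \in EU)) => jEU.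
  suff -> : d j = 0 by rewrite mulr0 subr0 Wy_le.
  have [_ Wj] := uninhibitedP _ jEU.
  rewrite /d mxE big1 ?oppr0 // => l _; rewrite mxE.
  by case: (boolP (l \in E)) => lE; rewrite ?mulr0 // Wj ?mul0r.
have [i iE Wji] := inhibited_input jE jEU.
have d_gt0 : 0 < d j.
  apply: lt_le_trans (_ : - W j i <= d j); first by rewrite oppr_gt0.
  rewrite /d mxE (bigD1 i) //= [inh i 0]mxE iE mulr1 opprD lerDl oppr_ge0 sumr_le0 // => l _.
  by rewrite mxE; case: (boolP (l \in E)) => lE; rewrite ?mulr0 // mulr1 Winh.
have : `|(W *m y) j 0| <= t * d j.
  by rewrite -ler_pdivrMr //; have := t_ge j; have := normr_ge0 ((W *m y) j 0); lra.
by have := y_ge0 j; lra.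
Qed.

Lemma graph_code_input_le0 (s : {set 'I_n}) j l : s \subset E -> s \in graph_code W E EU ->
  j \in EU -> j \notin s -> l \in s -> W j l <= 0.
Proof.
move=> sE; rewrite inE => /andP[_ /subsetP graph_s] jEU js ls.
rewrite leNgt; apply/negP => Wjl; suff : j \in s by rewrite (negPf js).
apply: graph_s.
have [jE _] := uninhibitedP _ jEU.
rewrite inE jEU andbT inE jE; apply/exists_inP; exists l => //.
by rewrite /GE_arc (subsetP sE) // jE Wjl andbT; apply: contraNneq js => <-.
Qed.

(* Off [U = E_U :&: s] the excitatory neurons of [s] fire at rate 1; on [U] they fire
   along a subinvariant vector of [W_U], scaled to absorb that input. *)
Lemma excitatory_subsolution (s : {set 'I_n}) : s \subset E ->
  spectral_radius (principal_submx W (EU :&: s)) < 1 -> s \in graph_code W E EU ->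
  exists y : 'cV[R]_n, [/\ forall j, 0 <= y j 0, forall j, j \in s -> 0 < y j 0,
    forall j, j \notin s -> y j 0 = 0 & forall j, j \in EU -> (W *m y) j 0 <= y j 0].
Proof.
have [_ [Wexc _]] := dale_W.
move=> sE rho1 graph_s; set U := EU :&: s; set A := principal_submx W U.
have A_ge0 a c : 0 <= A a c.
  by move: (enum_valP c); rewrite mxE inE => /andP[_ cs]; rewrite Wexc // (subsetP sE).
have [xU [xU_gt0 AxU]] := spectral_radius_lt1_subinvariant A_ge0 rho1.
pose K := 1 + \sum_j \sum_l `|W j l|.
have rowK j : \sum_l `|W j l| <= K - 1.
  rewrite /K addrAC subrr add0r [leRHS](bigD1 j) //= lerDl.
  by rewrite sumr_ge0 // => i _; apply: sumr_ge0.
have K_ge1 : 1 <= K by rewrite lerDl sumr_ge0 // => i _; apply: sumr_ge0.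
pose y : 'cV[R]_n := \col_j (K * extend xU j + (j \in s :\: U)%:R).
have yU (a : 'I_#|U|) : y (enum_val a) 0 = K * xU a.
  by rewrite mxE extend_enum_val inE enum_valP addr0.
have y_notU j : j \notin U -> y j 0 = (j \in s)%:R.
  by move=> jU; rewrite mxE extend_out // mulr0 add0r inE jU.
have y_s j : j \in s -> 0 < y j 0.
  move=> js; have [jU|/y_notU ->] := boolP (j \in U); last by rewrite js ltr01.
  by rewrite -(enum_rankK_in jU jU) yU mulr_gt0 // (lt_le_trans ltr01).
have y_out j : j \notin s -> y j 0 = 0.
  by move=> js; rewrite y_notU ?(negPf js) // inE negb_and js orbT.
have y_ge0 j : 0 <= y j 0.
  by have [/y_s/ltW|/y_out ->] := boolP (j \in s).
exists y; split=> // j jEU; have [js|js] := boolP (j \in s); last first.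
  rewrite y_out // mxE sumr_le0 // => l _.
  have [ls|/y_out ->] := boolP (l \in s); last by rewrite mulr0.
  by rewrite mulr_le0_ge0 ?(graph_code_input_le0 sE graph_s).
have jU : j \in U by rewrite inE jEU.
have Wy : (W *m y) j 0 = K * \sum_a A (enum_rank_in jU j) a * xU a +
    \sum_l W j l * (l \in s :\: U)%:R.
  have AjE a : A (enum_rank_in jU j) a = W j (enum_val a) by rewrite mxE enum_rankK_in.
  under [in RHS]eq_bigr do rewrite AjE.
  rewrite -(sum_mul_extend xU (W j)) mulr_sumr -big_split mxE.
  by apply: eq_bigr => l _; rewrite mxE /=; ring.
have rest : \sum_l W j l * (l \in s :\: U)%:R <= K - 1.
  apply: le_trans (rowK j); apply: ler_sum => l _; apply: le_trans (ler_norm _) _.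
  by rewrite normrM ler_piMr // ger0_norm ?ler0n // lern1 leq_b1.
have := ler_wpM2l (ltW (lt_le_trans ltr01 K_ge1)) (AxU (enum_rank_in jU j)).
rewrite -[j in y j 0](enum_rankK_in jU jU) yU Wy; lra.
Qed.

Lemma code_of_conditions (s : {set 'I_n}) : s \subset E ->
  spectral_radius (principal_submx W (EU :&: s)) < 1 -> s \in graph_code W E EU ->
  in_comb_code W E s.
Proof.
move=> sE rho1 graph_s.
have [y [y_ge0 y_s y_out Wy_le]] := excitatory_subsolution sE rho1 graph_s.
have y_offE j : j \notin E -> y j 0 = 0.
  by move=> jE; apply: y_out; apply: contra jE; apply: (subsetP sE).
have [x [x_ge0 Wx_le xE]] := inhibition_subsolution y_ge0 y_offE Wy_le.
suff <- : supp_plus E x = s by apply: comb_code_of_subsolution.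
apply/setP => j; rewrite inE; have [jE|jE] := boolP (j \in E); last first.
  by apply/esym/negbTE; apply: contra jE; apply: (subsetP sE).
by rewrite xE //; have [/y_s ->|/y_out ->] := boolP (j \in s); rewrite ?ltxx.
Qed.

End ThresholdLinear.

Unset Implicit Arguments.

Theorem mainTheorem4 (R : realType) (n : nat) (W : 'M[R]_n) (E : {set 'I_n})
    (s : {set 'I_n}) :
  dale W E -> ground_assumption W ->
  s \subset E -> s != set0 ->
  (in_comb_code W E s <->
     (spectral_radius (principal_submx W (uninhibited W E :&: s)) < 1 /\
      s \in graph_code W E (uninhibited W E))).
Proof.
move=> dale_W GA sE _; split=> [code_s|[rho1 graph_s]].
  split; first exact: (code_spectral_condition dale_W GA code_s).
  exact: (code_graph_condition dale_W code_s).
exact: (code_of_conditions dale_W sE rho1 graph_s).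
Qed.
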